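(* For every function $g:(0,\tfrac12)\to\mathbb N$ there is a (possibly infinite) family of graphs $\mathcal F$ with $C_4\in\mathcal F$ and a sequence $(\varepsilon_k)_{k\ge1}$ of positive reals with $\varepsilon_k\to0$, such that for every $k\ge1$ there is $n_0(k)$ so that for every $n\ge n_0(k)$ there is an $n$-vertex graph $G$ which is $\varepsilon_k$-far from being induced $\mathcal F$-free, and yet every induced subgraph of $G$ on $g(\varepsilon_k)$ vertices is induced $\mathcal F$-free.
   Context: A graph is induced $\mathcal F$-free if it contains no induced subgraph isomorphic to any $F\in\mathcal F$. An $n$-vertex graph $G$ is $\varepsilon$-far from satisfying a property $\mathcal P$ if one must add and/or delete at least $\varepsilon n^2$ edges of $G$ in order to obtain a graph satisfying $\mathcal P$. *)

From mathcomp Require Import all_boot.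
From Stdlib Require Import Reals.

Set Implicit Arguments.
Unset Strict Implicit.
Unset Printing Implicit Defensive.

Record graph := Graph {
  gsize : nat;
  gadj : rel 'I_gsize;
  gsym : symmetric gadj;
  girr : irreflexive gadj }.
Arguments gadj : clear implicits.

Definition induced_copy (F G : graph) : Prop :=
  exists f : 'I_(gsize F) -> 'I_(gsize G),
    injective f /\ forall x y, gadj G (f x) (f y) = gadj F x y.

Definition induced_free (Fam : graph -> Prop) (G : graph) : Prop :=
  forall F, Fam F -> ~ induced_copy F G.

Definition edit_dist (n : nat) (e1 e2 : rel 'I_n) : nat :=
  #|[set p : 'I_n * 'I_n | (p.1 < p.2)%N && (e1 p.1 p.2 != e2 p.1 p.2)]|.

Definition far_from_free (eps : R) (Fam : graph -> Prop) (G : graph) : Prop :=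
  forall (e : rel 'I_(gsize G)) (es : symmetric e) (ei : irreflexive e),
    induced_free Fam (@Graph (gsize G) e es ei) ->
    (eps * INR (gsize G) ^ 2 <= INR (edit_dist (gadj G) e))%R.

Lemma sub_sym (G : graph) m (f : 'I_m -> 'I_(gsize G)) :
  symmetric (fun x y => gadj G (f x) (f y)).
Proof. by move=> x y; rewrite gsym. Qed.

Lemma sub_irr (G : graph) m (f : 'I_m -> 'I_(gsize G)) :
  irreflexive (fun x y => gadj G (f x) (f y)).
Proof. by move=> x; rewrite girr. Qed.

Definition induced_sub (G : graph) m (f : 'I_m -> 'I_(gsize G)) : graph :=
  @Graph m (fun x y => gadj G (f x) (f y)) (sub_sym f) (sub_irr f).

(* The 4-cycle 0-1-2-3-0: i ~ j iff i + j is odd. *)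
Definition C4_adj : rel 'I_4 := fun x y => odd (x + y).

Lemma C4_sym : symmetric C4_adj.
Proof. by move=> x y; rewrite /C4_adj addnC. Qed.

Lemma C4_irr : irreflexive C4_adj.
Proof. by move=> x; rewrite /C4_adj addnn odd_double. Qed.

Definition C4 : graph := @Graph 4 C4_adj C4_sym C4_irr.
Arguments induced_sub G {m} f.

(* Let B_j be the blow-up of the cycle C_(j+5) by cliques of size g(eps_j) + 1,
   where eps_j = 1 / 64(j+5)^3, and let F = {C4} u {B_j}.  For fixed k take for G a
   blow-up of C_(k+5) on n vertices.  It has no induced C4 and no induced cycle of
   length L >= 4 other than k+5, so the only member of F it contains is B_k, which
   has more than g(eps_k) vertices: small induced subgraphs of G are F-free.
   Conversely, let H be C4-free and eps_k n^2-close to G.  Discarding the vertices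
   incident to many edits, the induced C4-freeness forces each class to become a
   clique after removing a few more vertices, and between two classes the wrong
   pairs are nested, so they are all covered by the few edits at one vertex.  What
   remains of each class is a clique of size at least g(eps_k) + 1 related to the
   other classes as in G, i.e. a copy of B_k in H. *)

From mathcomp Require Import all_boot zify.
From Stdlib Require Import Reals Lia Lra.

Set Implicit Arguments.
Unset Strict Implicit.
Unset Printing Implicit Defensive.

Local Open Scope nat_scope.

Definition cyc_close (m a b : nat) : bool :=
  [|| a == b, a.+1 == b, b.+1 == a, (a == 0) && (b.+1 == m) | (b == 0) && (a.+1 == m)].

Lemma cyc_closeP m a b :
  reflect (a = b \/ a.+1 = b \/ b.+1 = a \/ (a = 0 /\ b.+1 = m) \/ (b = 0 /\ a.+1 = m))
          (cyc_close m a b).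
Proof.
rewrite /cyc_close; apply: (iffP idP).
- by move/orP=> [/eqP|/orP[/eqP|/orP[/eqP|/orP[/andP[/eqP ? /eqP]|/andP[/eqP ? /eqP]]]]]; lia.
- by case=> [->|[<-|[<-|[[-> <-]|[-> <-]]]]]; rewrite !eqxx ?orbT.
Qed.

Lemma cyc_closeC m a b : cyc_close m a b = cyc_close m b a.
Proof. by apply/idP/idP => /cyc_closeP ?; apply/cyc_closeP; lia. Qed.

Definition cyc_next m a := if a.+1 == m then 0 else a.+1.

Section CycleImage.

Variables (m L : nat) (p : nat -> nat).
Hypothesis p_lt : forall x, x < L -> p x < m.

Lemma card_image_le :
  (forall x y, x < L -> y < L -> p x = p y -> x = y) -> L <= m.
Proof.
move=> p_inj; have p_ord (x : 'I_L) : p x < m by exact: p_lt.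
have : injective (fun x : 'I_L => Ordinal (p_ord x)).
  by move=> x y [] /(p_inj _ _ (ltn_ord x) (ltn_ord y)) /val_inj.
by move/leq_card; rewrite !card_ord.
Qed.

Lemma exists_missed_value : L < m -> exists2 b, b < m & forall y, y < L -> p y != b.
Proof.
move=> Lm; pose img := [set Ordinal (p_lt (ltn_ord y)) | y in 'I_L].
have : ~~ ([set: 'I_m] \subset img).
  apply/negP => /subset_leq_card; rewrite cardsT card_ord.
  by move=> /leq_trans /(_ (leq_imset_card _ _)); rewrite card_ord; lia.
case/subsetPn => b _ b_img; exists b => // y yL; apply/eqP => pyb.
by move: b_img; apply/negP/negPn/imsetP; exists (Ordinal yL) => //; apply: val_inj.
Qed.

(* A value hit by [p] whose successor on the m-cycle is missed: the largest hit
   value if [0] is missed, otherwise the predecessor of the least missed value. *)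
Lemma exists_cycle_gap : 0 < L -> (exists2 b, b < m & forall y, y < L -> p y != b) ->
  exists2 x, x < L & forall y, y < L -> p y != cyc_next m (p x).
Proof.
move=> L0 [b bm b_miss].
pose hit c := [exists y : 'I_L, p y == c].
have hitP c : reflect (exists2 y, y < L & p y = c) (hit c).
  apply: (iffP existsP) => [[y /eqP <-]|[y yL <-]]; first by exists y.
  by exists (Ordinal yL).
have [hit0|miss0] := boolP (hit 0).
- have missed : exists c, (c < m) && ~~ hit c.
    by exists b; rewrite bm; apply/hitP => -[y yL /eqP]; rewrite (negbTE (b_miss _ yL)).
  case: (ex_minnP missed) => c /andP [cm c_miss] c_min.
  have c0 : 0 < c by case: c cm c_miss {c_min} => // _; rewrite hit0.
  have : hit c.-1.
    case: (boolP (hit c.-1)) => // c1_miss.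
    by have := c_min c.-1; rewrite c1_miss andbT (_ : c.-1 < m) //; [move/(_ isT); lia | lia].
  case/hitP => x xL px; exists x => // y yL.
  rewrite px /cyc_next; case: ifP => [/eqP|_]; first lia.
  by rewrite prednK //; apply/eqP => pyc; move/hitP: c_miss; apply; exists y.
- have hit_le c : hit c -> c <= m by case/hitP => y yL <-; apply/ltnW/p_lt.
  case: (ex_maxnP (ex_intro _ (p 0) (introT (hitP _) (ex_intro2 _ _ 0 L0 erefl))) hit_le)
    => a a_hit a_max.
  case/hitP: a_hit => x xL px; exists x => // y yL; rewrite px /cyc_next.
  case: ifP => _; apply/eqP => pya.
    by move/hitP: miss0; apply; exists y.
  by have := a_max a.+1 (introT (hitP _) (ex_intro2 _ _ y yL pya)); rewrite ltnn.
Qed.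

End CycleImage.

Section CycleEmbedding.

Variables (m L : nat) (p : nat -> nat).
Hypotheses (L4 : 4 <= L) (p_lt : forall x, x < L -> p x < m).
Hypothesis p_embed : forall x y, x < L -> y < L -> x != y ->
  cyc_close m (p x) (p y) = cyc_close L x y.

(* Two vertices of C_L with the same image would be adjacent on C_L, and the vertex
   following them would then tell them apart. *)
Lemma cycle_embedding_inj x y : x < L -> y < L -> p x = p y -> x = y.
Proof.
have next_sep x1 y1 : x1 < L -> y1 < L -> p x1 = p y1 ->
    y1 = x1.+1 \/ (x1.+1 = L /\ y1 = 0) -> False.
  move=> x1L y1L pxy y1_next; pose z := cyc_next L y1.
  have zL : z < L by rewrite /z /cyc_next; case: ifP => /eqP; lia.
  have x1z : x1 != z by rewrite /z /cyc_next; case: ifP => /eqP; lia.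
  have y1z : y1 != z by rewrite /z /cyc_next; case: ifP => /eqP; lia.
  have yz : cyc_close L y1 z by apply/cyc_closeP; rewrite /z /cyc_next; case: ifP => /eqP; lia.
  have /cyc_closeP : cyc_close L x1 z by rewrite -p_embed // pxy p_embed.
  by rewrite /z /cyc_next; case: ifP => /eqP; lia.
move=> xL yL pxy; have [//|xy] := eqVneq x y; exfalso.
have /cyc_closeP xy_adj : cyc_close L x y by rewrite -p_embed // pxy; apply/cyc_closeP; left.
have [] : (y = x.+1 \/ (x.+1 = L /\ y = 0)) \/ (x = y.+1 \/ (y.+1 = L /\ x = 0)) by lia.
- exact: (next_sep x y).
- exact: (next_sep y x).
Qed.

(* At a gap [x], both neighbours of [x] on C_L must be mapped to the predecessor
   of [p x], against injectivity. *)
Lemma cycle_embedding_len : L = m.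
Proof.
have [//|Lm] := eqVneq L m; exfalso.
have Lm' : L < m by have := card_image_le p_lt cycle_embedding_inj; lia.
have L0 : 0 < L by lia.
have [x xL x_gap] := exists_cycle_gap p_lt L0 (exists_missed_value p_lt Lm').
pose xp := cyc_next L x.
pose xm := if x == 0 then L.-1 else x.-1.
have xpL : xp < L by rewrite /xp /cyc_next; case: ifP => /eqP; lia.
have xmL : xm < L by rewrite /xm; case: ifP => /eqP; lia.
have xpx : x != xp by rewrite /xp /cyc_next; case: ifP => /eqP; lia.
have xmx : x != xm by rewrite /xm; case: ifP => /eqP; lia.
have xpm : xp != xm by rewrite /xp /xm /cyc_next; case: ifP => /eqP; case: ifP => /eqP; lia.
have cp : cyc_close m (p x) (p xp).
  by rewrite p_embed //; apply/cyc_closeP; rewrite /xp /cyc_next; case: ifP => /eqP; lia.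
have cm : cyc_close m (p x) (p xm).
  by rewrite p_embed //; apply/cyc_closeP; rewrite /xm; case: ifP => /eqP; lia.
have np : p x != p xp by apply: contra_neq xpx => /cycle_embedding_inj ->.
have nm : p x != p xm by apply: contra_neq xmx => /cycle_embedding_inj ->.
have : p xp = p xm.
  move: (x_gap _ xpL) (x_gap _ xmL) np nm cp cm (p_lt xL) (p_lt xpL) (p_lt xmL).
  rewrite /cyc_next; case: ifP => /eqP; move=> ? ? ? ? ? /cyc_closeP ? /cyc_closeP; lia.
by move/cycle_embedding_inj => /(_ xpL xmL) /eqP; rewrite (negbTE xpm).
Qed.

End CycleEmbedding.

Lemma induced_copy_trans F G H :
  induced_copy F G -> induced_copy G H -> induced_copy F H.
Proof.
case=> f [f_inj fA] [g [g_inj gA]]; exists (g \o f); split; first exact: inj_comp.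
by move=> x y; rewrite /= gA fA.
Qed.

Lemma induced_sub_copy G m (f : 'I_m -> 'I_(gsize G)) :
  injective f -> induced_copy (induced_sub G f) G.
Proof. by move=> f_inj; exists f. Qed.

Lemma induced_copy_size F G : induced_copy F G -> gsize F <= gsize G.
Proof. by case=> f [f_inj _]; have := leq_card f f_inj; rewrite !card_ord. Qed.

Lemma C4_copy_of_square n (e : rel 'I_n) (e_sym : symmetric e) (e_irr : irreflexive e)
    (a0 a1 a2 a3 : 'I_n) :
  e a0 a1 -> e a1 a2 -> e a2 a3 -> e a3 a0 -> ~~ e a0 a2 -> ~~ e a1 a3 ->
  a0 != a2 -> a1 != a3 -> induced_copy C4 (Graph e_sym e_irr).
Proof.
move=> e01 e12 e23 e30 n02 n13 d02 d13.
have e_neq x y : e x y -> x != y by apply: contraTneq => ->; rewrite e_irr.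
have d01 := e_neq _ _ e01; have d12 := e_neq _ _ e12.
have d23 := e_neq _ _ e23; have d30 := e_neq _ _ e30.
exists (fun x : 'I_4 => nth a0 [:: a0; a1; a2; a3] x); split.
- move=> [[|[|[|[|x]]]] hx] [[|[|[|[|y]]]] hy] //= E; apply: val_inj => //=;
  move: d01 d12 d23 d30 d02 d13;
  by rewrite E ?eqxx //= ?(eq_sym a0) ?(eq_sym a1) ?(eq_sym a2) ?eqxx.
- move=> [[|[|[|[|x]]]] hx] [[|[|[|[|y]]]] hy] //=; rewrite /C4_adj /= ?e_irr //;
  rewrite ?(e_sym a1 a0) ?(e_sym a2 a1) ?(e_sym a3 a2) ?(e_sym a0 a3) ?(e_sym a2 a0)
          ?(e_sym a3 a1) //;
  by apply/negbTE.
Qed.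

(* [blowup m n] lives on ['I_n] and puts [u] in the class [u %% m]: each class is
   a clique, and two classes are completely joined when they are adjacent on the
   m-cycle.  With all classes of size [t] it is the blow-up of [C_m] by cliques of
   size [t]; [blowup L L] is the cycle [C_L] itself. *)
Definition blowup_adj m n : rel 'I_n :=
  fun u v => (u != v) && cyc_close m (u %% m) (v %% m).
Arguments blowup_adj : clear implicits.

Lemma blowup_sym m n : symmetric (blowup_adj m n).
Proof. by move=> u v; rewrite /blowup_adj eq_sym cyc_closeC. Qed.

Lemma blowup_irr m n : irreflexive (blowup_adj m n).
Proof. by move=> u; rewrite /blowup_adj eqxx. Qed.

Definition blowup m n : graph := Graph (@blowup_sym m n) (@blowup_irr m n).

Lemma blowup_cycle_free m n L : 0 < m -> 4 <= L -> L != m ->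
  ~ induced_copy (blowup L L) (blowup m n).
Proof.
case: L => // L m0 L4 Lm [f [f_inj fA]]; move/eqP: Lm; apply.
pose h x := f (inord x) : 'I_n.
have h_inj x y : x < L.+1 -> y < L.+1 -> h x = h y -> x = y.
  by move=> xL yL /f_inj /(congr1 val) /=; rewrite !inordK.
apply: (@cycle_embedding_len m L.+1 (fun x => h x %% m)) => // [x _|x y xL yL xy].
  by rewrite ltn_pmod.
have := fA (inord x) (inord y); rewrite /= /blowup_adj -!val_eqE /= !inordK //.
rewrite xy (modn_small xL) (modn_small yL) /= => <-.
by rewrite (contra_neq (h_inj _ _ xL yL) xy).
Qed.

Lemma cycle_copy_blowup m t : 0 < t -> induced_copy (blowup m m) (blowup m (m * t)).
Proof.
move=> t0; have m_le : m <= m * t by rewrite leq_pmulr.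
exists (widen_ord m_le); split; first by move=> x y [] /val_inj.
by move=> x y; rewrite /= /blowup_adj -!val_eqE.
Qed.

Lemma C4_copy_cycle : induced_copy (blowup 4 4) C4.
Proof. by exists (fun x : 'I_4 => x); split=> // -[[|[|[|[|x]]]] ?] // [[|[|[|[|y]]]] ?]. Qed.

Lemma blowup_C4_free m n : 5 <= m -> ~ induced_copy C4 (blowup m n).
Proof.
move=> m5 /(induced_copy_trans C4_copy_cycle).
by apply: blowup_cycle_free => //; lia.
Qed.

Lemma blowup_blowup_free m n m' t : 0 < t -> 0 < m -> 4 <= m' -> m' != m ->
  ~ induced_copy (blowup m' (m' * t)) (blowup m n).
Proof.
move=> t0 m0 m'4 m'm /(induced_copy_trans (cycle_copy_blowup m' t0)).
exact: blowup_cycle_free.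
Qed.

Lemma card_bigcup_le (T I : finType) (P : pred I) (F : I -> {set T}) :
  #|\bigcup_(i | P i) F i| <= \sum_(i | P i) #|F i|.
Proof.
apply: (big_ind2 (fun (S : {set T}) k => #|S| <= k)) => //; first by rewrite cards0.
by move=> S1 k1 S2 k2 h1 h2; apply: leq_trans (leq_card_setU _ _) (leq_add h1 h2).
Qed.

Lemma card_residue_class m n j : 0 < m -> j < m -> n %/ m <= #|[set v : 'I_n | v %% m == j]|.
Proof.
move=> m0 jm.
have ok (k : 'I_(n %/ m)) : k * m + j < n.
  have : k.+1 * m <= n %/ m * m by rewrite leq_mul2r ltn_ord orbT.
  have := leq_divM n m; rewrite mulSn; lia.
pose g (k : 'I_(n %/ m)) : 'I_n := Ordinal (ok k).
have g_inj : injective g.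
  move=> k1 k2 /(congr1 val) /= /eqP; rewrite eqn_add2r eqn_mul2r.
  by case/orP => [/eqP|/eqP/val_inj] //; lia.
rewrite -[n %/ m]card_ord -(card_imset _ g_inj); apply/subset_leq_card/subsetP => v.
by case/imsetP => k _ ->; rewrite inE /= modnMDl modn_small.
Qed.

Lemma high_count_small m n h D E :
  1 < m -> h * D.+1 <= 2 * E -> 64 * (m * m * m) * E < n * n -> n < D.+1 * (4 * m * (m + 2)) ->
  4 * m * h < n.
Proof.
move=> m2 hD En nD.
set M := 4 * m * (m + 2) in nD.
have hn : h * n <= 2 * E * M.
  apply: (@leq_trans (h * D.+1 * M)); last by rewrite leq_mul2r hD orbT.
  by rewrite -mulnA leq_mul2l ltnW ?orbT.
have n0 : 0 < n by move: En; case: (n) => //; rewrite muln0.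
set K := 64 * (m * m * m) in En.
have hK : K * h < 2 * M * n.
  rewrite -(ltn_pmul2r n0) -mulnA.
  apply: leq_ltn_trans (leq_mul (leqnn K) hn) _.
  have -> : K * (2 * E * M) = 2 * M * (K * E) by nia.
  by rewrite -[X in _ < X]mulnA ltn_pmul2l // /M; lia.
have : 8 * (m * m) * h < (m + 2) * n.
  by rewrite -(ltn_pmul2l (_ : 0 < 8 * m)); [move: hK; rewrite /K /M; nia | lia].
nia.
Qed.

Lemma class_budget m n t q h D T : 1 < m -> n < q.+1 * m ->
  q <= T + h + 2 + (m + 2) * D -> 4 * m * h < n -> 4 * m * (m + 2) * D <= n ->
  2 * m * t + 6 * m < n -> t <= T.
Proof.
move=> m2 nq qT hn Dn tn.
have : 4 * m * q <= 4 * m * (T + h + 2 + (m + 2) * D) by rewrite leq_mul2l qT orbT.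
have : 2 * m * t < 2 * m * T by nia.
by rewrite ltn_pmul2l; [move/ltnW | lia].
Qed.

Section Removal.

Variables (m n : nat) (e : rel 'I_n) (e_sym : symmetric e) (e_irr : irreflexive e).
Hypothesis e_C4_free : ~ induced_copy C4 (Graph e_sym e_irr).
Hypothesis m_gt1 : 1 < m.

Let m_gt0 : 0 < m. Proof. exact: ltnW. Qed.

Lemma no_induced_square (a0 a1 a2 a3 : 'I_n) :
  e a0 a1 -> e a1 a2 -> e a2 a3 -> e a3 a0 -> ~~ e a0 a2 -> ~~ e a1 a3 ->
  a0 != a2 -> a1 != a3 -> False.
Proof. by move=> *; apply: e_C4_free; exact: (@C4_copy_of_square _ _ _ _ a0 a1 a2 a3). Qed.

Definition mismatch u v := e u v != blowup_adj m n u v.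
Definition mismatches u := [set v | mismatch u v].

Lemma mismatchC u v : mismatch u v = mismatch v u.
Proof. by rewrite /mismatch e_sym blowup_sym. Qed.

Lemma eq_blowup_adj u v : ~~ mismatch u v -> e u v = blowup_adj m n u v.
Proof. by rewrite negbK => /eqP. Qed.

Lemma sum_card_mismatches :
  \sum_u #|mismatches u| <= 2 * edit_dist (blowup_adj m n) e.
Proof.
have -> : \sum_u #|mismatches u| = #|[set p : 'I_n * 'I_n | mismatch p.1 p.2]|.
  rewrite -sum1_card (eq_bigl (fun p : 'I_n * 'I_n => true && mismatch p.1 p.2));
    last by move=> p; rewrite inE.
  rewrite -(pair_big_dep xpredT mismatch (fun _ _ => 1)).
  by apply: eq_bigr => u _; rewrite -sum1_card; apply: eq_bigl => v; rewrite inE.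
pose Es := [set p : 'I_n * 'I_n | (p.1 < p.2) && (blowup_adj m n p.1 p.2 != e p.1 p.2)].
have sub : [set p : 'I_n * 'I_n | mismatch p.1 p.2] \subset Es :|: [set (q.2, q.1) | q in Es].
  apply/subsetP => -[u v]; rewrite !inE /= => uv.
  case: (ltngtP u v) => [lt_uv|lt_vu|/val_inj uv_eq].
  - by apply/orP; left; rewrite /= eq_sym.
  - apply/orP; right; apply/imsetP; exists (v, u) => //.
    by rewrite inE /= lt_vu eq_sym blowup_sym e_sym.
  - by move: uv; rewrite uv_eq /mismatch e_irr blowup_irr.
apply: leq_trans (subset_leq_card sub) _; apply: leq_trans (leq_card_setU _ _) _.
by rewrite mul2n -addnn leq_add2l leq_imset_card.
Qed.

(* At most [n / 4m] vertices have more than [threshold] mismatches when the edit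
   distance is below [n^2 / 64m^3], and each class loses at most [(m + 2) threshold
   <= n / 4m] further vertices below. *)
Definition threshold := n %/ (4 * m * (m + 2)).
Definition high := [set u | threshold < #|mismatches u|].

Lemma card_high : #|high| * threshold.+1 <= 2 * edit_dist (blowup_adj m n) e.
Proof.
apply: leq_trans sum_card_mismatches; rewrite -sum_nat_const.
apply: (@leq_trans (\sum_(u in high) #|mismatches u|)).
  by apply: leq_sum => u; rewrite inE.
by rewrite [X in _ <= X](bigID (mem high)) leq_addr.
Qed.

Definition low_class j := [set v : 'I_n | v %% m == j] :\: high.

Lemma low_class_mod j v : v \in low_class j -> v %% m = j.
Proof. by rewrite /low_class !inE => /andP [_ /eqP]. Qed.

Lemma card_mismatches_low j v : v \in low_class j -> #|mismatches v| <= threshold.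
Proof. by rewrite /low_class !inE -leqNgt => /andP [-> _]. Qed.

Definition class_nonedge j :=
  [pick q : 'I_n * 'I_n |
     [&& q.1 \in low_class j, q.2 \in low_class j, q.1 != q.2 & ~~ e q.1 q.2]].

(* A non-edge [a b] inside a low class, together with two further vertices [u v]
   of the class that agree with the blow-up on [a] and [b], would span an induced
   C4 [a u b v] unless [u v] is an edge.  Removing [a], [b] and their few
   mismatches thus leaves a clique of [e]. *)
Definition core_class j :=
  if class_nonedge j is Some q
  then low_class j :\: (q.1 |: (q.2 |: (mismatches q.1 :|: mismatches q.2)))
  else low_class j.

Lemma core_class_low j : core_class j \subset low_class j.
Proof. by rewrite /core_class; case: class_nonedge => [q|] //; apply: subsetDl. Qed.

Lemma core_class_mod j v : v \in core_class j -> v %% m = j.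
Proof. by move/(subsetP (core_class_low j)); apply: low_class_mod. Qed.

Lemma core_class_clique j u v : u \in core_class j -> v \in core_class j -> u != v -> e u v.
Proof.
move=> uS vS uv; apply/negPn/negP => n_uv; move: uS vS; rewrite /core_class /class_nonedge.
case: pickP => [[a b] /= /and4P [aL bL ab n_ab]|none]; last first.
  by move=> uL vL; have := none (u, v); rewrite /= uL vL uv n_uv.
have kept w : w \in low_class j :\: (a |: (b |: (mismatches a :|: mismatches b))) ->
    [/\ w != a, w != b, ~~ mismatch a w, ~~ mismatch b w & w \in low_class j].
  case/setDP => wL; rewrite !in_setU1 in_setU !negb_or => /and4P [? ? H1 H2].
  by split; rewrite // -[mismatch _ _]in_set.
have agree x y : x \in low_class j -> y \in low_class j -> x != y -> ~~ mismatch x y -> e x y.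
  move=> xL yL xy /eq_blowup_adj ->.
  by rewrite /blowup_adj xy (low_class_mod xL) (low_class_mod yL); apply/cyc_closeP; left.
case/kept => ua ub au bu uL; case/kept => va vb av bv vL.
apply: (no_induced_square (a0 := a) (a1 := u) (a2 := b) (a3 := v)) => //.
- by apply: agree; rewrite // eq_sym.
- by rewrite e_sym; apply: agree; rewrite // eq_sym.
- by apply: agree; rewrite // eq_sym.
- by rewrite e_sym; apply: agree; rewrite // eq_sym.
Qed.

Lemma card_core_class j : #|low_class j| <= #|core_class j| + (2 + 2 * threshold).
Proof.
rewrite /core_class /class_nonedge.
case: pickP => [[a b] /= /and4P [aL bL _ _]|_]; last by rewrite leq_addr.
set X := a |: _; rewrite -(cardsID X (low_class j)) addnC leq_add2l.
apply: leq_trans (subset_leq_card (subsetIr _ _)) _.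
rewrite /X !cardsU1.
have U_ab : #|mismatches a :|: mismatches b| <= #|mismatches a| + #|mismatches b|.
  exact: leq_card_setU.
move: U_ab (card_mismatches_low aL) (card_mismatches_low bL).
by case: (a \notin _); case: (b \notin _) => /=; lia.
Qed.

Definition cross_mismatches j x := [set y in core_class j | mismatch x y].

Definition spoiled_by i j :=
  [set y in core_class j | [exists x in core_class i, mismatch x y]].

Definition spoiled j := \bigcup_(i < m | i != j :> nat) spoiled_by i j.

Definition clean_class j := core_class j :\: spoiled j.

Lemma core_class_neq i j u v : i != j -> u \in core_class i -> v \in core_class j -> u != v.
Proof.
move=> ij uS vS; apply: contra_neq ij => uv.
by rewrite -(core_class_mod uS) uv (core_class_mod vS).
Qed.

Lemma blowup_adj_core i j u v : i != j -> u \in core_class i -> v \in core_class j ->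
  blowup_adj m n u v = cyc_close m i j.
Proof.
by move=> ij uS vS; rewrite /blowup_adj (core_class_neq ij uS vS) (core_class_mod uS)
  (core_class_mod vS).
Qed.

(* Crossing mismatches [x y], [x' y'] between two core classes, with the clique
   edges [x x'] and [y y'], would span an induced C4. *)
Lemma cross_mismatches_nested i j x x' : i != j ->
    x \in core_class i -> x' \in core_class i ->
  (cross_mismatches j x \subset cross_mismatches j x') ||
  (cross_mismatches j x' \subset cross_mismatches j x).
Proof.
move=> ij xS x'S; apply/negPn/negP; rewrite negb_or.
case/andP => /subsetPn [y + nxy'] /subsetPn [y' + nx'y]; rewrite !inE.
case/andP => yS bxy /andP [y'S bx'y']; rewrite !inE yS y'S /= in nxy' nx'y.
have xx' : x != x' by apply: contraNneq nxy' => <-.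
have yy' : y != y' by apply: contraNneq nx'y => <-.
have e_xx' := core_class_clique xS x'S xx'.
have e_yy' := core_class_clique yS y'S yy'.
have d := core_class_neq ij.
move: bxy nxy' bx'y' nx'y; rewrite /mismatch !(blowup_adj_core ij) //.
case: (cyc_close m i j); rewrite ?eqb_id ?eqbF_neg ?negbK => b_xy n_x'y b_x'y' n_xy'.
- by apply: (no_induced_square (a0 := x) (a1 := y') (a2 := y) (a3 := x'));
    first [done | rewrite e_sym | exact: d | rewrite eq_sym d].
- by apply: (no_induced_square (a0 := x) (a1 := y) (a2 := y') (a3 := x'));
    first [done | rewrite e_sym | exact: d | rewrite eq_sym d].
Qed.

Lemma card_spoiled_by i j : i != j -> #|spoiled_by i j| <= threshold.
Proof.
move=> ij; have [S0|[x0 x0S]] := set_0Vmem (core_class i).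
  rewrite (_ : spoiled_by i j = set0) ?cards0 //; apply/setP => y; rewrite !inE.
  by apply/negbTE; apply/nandP; right; apply/existsP => -[x]; rewrite S0 inE.
case: (@arg_maxnP _ x0 (mem (core_class i)) (fun x => #|cross_mismatches j x|) x0S)
  => xm xmS xm_max.
apply: (@leq_trans #|cross_mismatches j xm|).
  apply/subset_leq_card/subsetP => y; rewrite inE => /andP [yS /existsP [x /andP [xS bxy]]].
  have yN : y \in cross_mismatches j x by rewrite inE yS.
  case/orP: (cross_mismatches_nested ij xS xmS) => [/subsetP|sub]; first exact.
  suff -> : cross_mismatches j xm = cross_mismatches j x by [].
  by apply/eqP; rewrite eqEcard sub; exact: xm_max.
apply: leq_trans (card_mismatches_low (subsetP (core_class_low i) _ xmS)).
by apply/subset_leq_card/subsetP => y; rewrite !inE => /andP [].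
Qed.

Lemma card_spoiled j : #|spoiled j| <= m * threshold.
Proof.
apply: leq_trans (card_bigcup_le _ _) _.
rewrite -[m in m * _]card_ord -sum_nat_const big_mkcond leq_sum // => i _.
by case: ifP => // ij; apply: card_spoiled_by; rewrite ij.
Qed.

Hypothesis e_close : 64 * (m * m * m) * edit_dist (blowup_adj m n) e < n * n.

Lemma card_clean_class t j : j < m -> 2 * m * t + 6 * m < n -> t <= #|clean_class j|.
Proof.
move=> jm tn; have M0 : 0 < 4 * m * (m + 2) by rewrite !muln_gt0; lia.
apply: (@class_budget m n t (n %/ m) #|high| threshold _ m_gt1) => //.
- exact: ltn_ceil.
- have := card_residue_class n m_gt0 jm.
  have : #|[set v : 'I_n | v %% m == j]| <= #|low_class j| + #|high|.
    by rewrite -(cardsID high) addnC leq_add2l subset_leq_card ?subsetIr.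
  have : #|core_class j| <= #|clean_class j| + #|spoiled j|.
    by rewrite -(cardsID (spoiled j) (core_class j)) addnC leq_add2l subset_leq_card ?subsetIr.
  by move: (card_core_class j) (card_spoiled j); lia.
- exact: high_count_small m_gt1 card_high e_close (ltn_ceil _ M0).
- by rewrite mulnC leq_divM.
Qed.

Lemma blowup_copy_of_close t : 2 * m * t + 6 * m < n ->
  induced_copy (blowup m (m * t)) (Graph e_sym e_irr).
Proof.
move=> tn; have n0 : 0 < n by lia.
pose f (x : 'I_(m * t)) : 'I_n := nth (Ordinal n0) (enum (clean_class (x %% m))) (x %/ m).
have x_size (x : 'I_(m * t)) : x %/ m < size (enum (clean_class (x %% m))).
  rewrite -cardE; apply: leq_trans (card_clean_class (ltn_pmod _ m_gt0) tn).
  by rewrite ltn_divLR // [t * m]mulnC.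
have fT x : f x \in clean_class (x %% m) by rewrite -mem_enum mem_nth.
have fS x : f x \in core_class (x %% m) by move: (fT x); rewrite inE => /andP [].
have f_mod x : f x %% m = x %% m := core_class_mod (fS x).
have f_inj : injective f.
  move=> x y fxy; have xy_mod : x %% m = y %% m by rewrite -f_mod fxy f_mod.
  move: fxy; rewrite /f xy_mod => /eqP.
  rewrite nth_uniq ?enum_uniq ?x_size -?xy_mod ?x_size // => /eqP xy_div.
  by apply: val_inj; rewrite /= (divn_eq x m) (divn_eq y m) xy_mod xy_div.
exists f; split => // x y /=; rewrite /blowup_adj.
have [<-|xy] := eqVneq x y; first by rewrite e_irr.
have fxy : f x != f y by apply: contra_neq xy; apply: f_inj.
have [xy_mod|xy_mod] := eqVneq (x %% m) (y %% m).
  rewrite xy_mod (_ : cyc_close _ _ _) /=; last by apply/cyc_closeP; left.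
  by apply: core_class_clique (fS x) _ fxy; rewrite xy_mod.
have : ~~ mismatch (f x) (f y).
  case/setDP: (fT y) => _; apply: contra => bxy; apply/bigcupP.
  exists (Ordinal (ltn_pmod x m_gt0)) => //.
  by rewrite inE fS; apply/existsP; exists (f x); rewrite fS.
by move/eq_blowup_adj ->; rewrite /blowup_adj fxy !f_mod.
Qed.

End Removal.

Definition cycle_len k := k + 5.
Definition eps_denom k := 64 * (cycle_len k * cycle_len k * cycle_len k).
Definition eps_seq k : R := / INR (eps_denom k).

Lemma cycle_len_le_eps_denom k : cycle_len k <= eps_denom k.
Proof. by rewrite /eps_denom /cycle_len; nia. Qed.

Lemma eps_seq_pos k : (0 < eps_seq k)%R.
Proof.
apply/Rinv_0_lt_compat/lt_0_INR/ltP.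
by have := cycle_len_le_eps_denom k; rewrite /cycle_len; lia.
Qed.

Lemma eps_seq_le k : (eps_seq k <= / INR (cycle_len k))%R.
Proof.
apply: Rinv_le_contravar; first by apply/lt_0_INR/ltP; rewrite /cycle_len; lia.
exact/le_INR/leP/cycle_len_le_eps_denom.
Qed.

Lemma eps_seq_lt_half k : (eps_seq k < 1 / 2)%R.
Proof.
have eps_denom3 : (3 <= INR (eps_denom k))%R.
  have -> : 3%R = INR 3 by rewrite INR_IZR_INZ.
  by apply/le_INR/leP; have := cycle_len_le_eps_denom k; rewrite /cycle_len; lia.
by have := @Rinv_le_contravar 3 _ ltac:(lra) eps_denom3; rewrite /eps_seq; lra.
Qed.

Lemma eps_seq_cv : Un_cv eps_seq 0%R.
Proof.
move=> eps eps0; case: (@archimed_cor1 eps eps0) => N [N_eps N0].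
exists N => k kN; rewrite /R_dist Rminus_0_r Rabs_right; last by have := eps_seq_pos k; lra.
apply: Rle_lt_trans (eps_seq_le k) (Rle_lt_trans _ _ _ _ N_eps).
by apply: Rinv_le_contravar; [apply/lt_0_INR/ltP | apply/le_INR/leP]; rewrite /cycle_len; lia.
Qed.

Lemma nat_lt_of_INR_lt_inv K n E :
  0 < K -> (INR E < / INR K * INR n ^ 2)%R -> K * E < n * n.
Proof.
move=> K0 lt_E; apply/ltP/INR_lt; rewrite !mult_INR.
have K0' : (0 < INR K)%R by apply/lt_0_INR/ltP.
have := Rmult_lt_compat_l _ _ _ K0' lt_E.
by rewrite -Rmult_assoc Rinv_r ?Rmult_1_l //; lra.
Qed.

Definition blowup_family (g : R -> nat) (F : graph) : Prop :=
  F = C4 \/ exists j, F = blowup (cycle_len j) (cycle_len j * (g (eps_seq j)).+1).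

Lemma blowup_far_from_free g k n :
  2 * cycle_len k * (g (eps_seq k)).+1 + 6 * cycle_len k < n ->
  far_from_free (eps_seq k) (blowup_family g) (blowup (cycle_len k) n).
Proof.
move=> large e e_sym e_irr e_free; apply: Rnot_lt_le => close.
apply: (e_free _ (or_intror (ex_intro _ k erefl))).
apply: (blowup_copy_of_close _ _ _ large).
- by apply: e_free; left.
- by rewrite /cycle_len; lia.
- by apply: nat_lt_of_INR_lt_inv close; rewrite /eps_denom /cycle_len; nia.
Qed.

(* The blow-up of [C_(cycle_len k)] in the family needs more than [g (eps_seq k)]
   vertices, and every other member contains an induced cycle of another length. *)
Lemma blowup_small_free g k n (f : 'I_(g (eps_seq k)) -> 'I_n) : injective f ->
  induced_free (blowup_family g) (induced_sub (blowup (cycle_len k) n) f).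
Proof.
move=> f_inj F [-> | [j ->]] copy.
all: have := induced_copy_trans copy (@induced_sub_copy (blowup _ n) _ f f_inj).
  by apply: blowup_C4_free; rewrite /cycle_len leq_addl.
have [jk|jk] := eqVneq j k.
  by move=> _; have := induced_copy_size copy; rewrite /= jk /cycle_len; nia.
by apply: blowup_blowup_free; rewrite /cycle_len //; lia.
Qed.

Theorem theorem5p1 :
  forall g : R -> nat,
  exists (Fam : graph -> Prop) (eps : nat -> R),
    Fam C4 /\
    (forall k, (0 < eps k)%R /\ (eps k < 1/2)%R) /\
    Un_cv eps 0%R /\
    forall k : nat, (1 <= k)%N ->
      exists n0 : nat, forall n : nat, (n0 <= n)%N ->
        exists G : graph,
          gsize G = n /\
          far_from_free (eps k) Fam G /\
          forall f : 'I_(g (eps k)) -> 'I_(gsize G),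
            injective f -> induced_free Fam (induced_sub G f).
Proof.
move=> g; exists (blowup_family g), eps_seq.
split; first by left.
split; first by move=> k; split; [exact: eps_seq_pos | exact: eps_seq_lt_half].
split; first exact: eps_seq_cv.
move=> k _; exists (2 * cycle_len k * (g (eps_seq k)).+1 + 6 * cycle_len k).+1 => n large.
exists (blowup (cycle_len k) n); split=> //; split; first exact: blowup_far_from_free.
exact: blowup_small_free.
Qed.
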